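(* Let $\alpha$ be a nonzero algebraic number of degree $k\ge2$, let $K$ be the Galois closure of $\mathbb{Q}(\alpha)$ and $d=[K:\mathbb{Q}]$. Let $q$ be a positive integer. If $\mathrm{Tr}_{K/\mathbb{Q}}(\alpha^j)\in\frac1q\mathbb{Z}$ for all $j=1,2,\dots,d+d\lfloor\log_2(qd)\rfloor+1$, then $\alpha$ is an algebraic integer.
   Context: $\mathrm{Tr}_{K/\mathbb{Q}}$ is the field trace and $\lfloor\cdot\rfloor$ the integer part. *)

From HB Require Import structures.
From mathcomp Require Import all_boot all_order all_algebra all_field.
Set Implicit Arguments. Unset Strict Implicit. Unset Printing Implicit Defensive.
Import GRing.Theory Num.Theory.
Local Open Scope ring_scope.

Definition is_alg_int (L : fieldType) (x : L) : Prop :=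
  exists p : {poly int}, p \is monic /\ root (map_poly (fun z : int => z%:~R) p) x.

Definition in_invq_Z (L : fieldExtType rat) (q : nat) (y : L) : Prop :=
  exists z : int, y = ((z%:~R / q%:R : rat)%:A).

From HB Require Import structures.
From mathcomp Require Import all_boot all_order all_algebra all_field.
From mathcomp Require Import all_fingroup ring.

(* The conjugates of [alpha] are the [s alpha], [s] in the Galois group, and
   [Phi = prod_s (1 - s(alpha) X)] has rational coefficients, constant term 1 and degree
   at most [d]. Newton's identities give [S Phi + X Phi' = 0 mod X^(N+1)], where
   [S = sum_(k <= N) Tr(alpha^k) X^k] has coefficients in [(1/q) Z]. Write [Phi = c G] with
   [G] primitive in [Z[X]]. If a prime [p] divided [G(0)], let [m >= 1] be the first index
   with [p] not dividing [G_m]; Hensel lifting gives [G = (X^m + p V) U mod p^(v+1)] with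
   [U(0)] prime to [p], and the integral relation [q S G + q X G' = 0 mod X^(N+1)] then
   forces [N < m (v_p(q m) + 1) <= d (log_2(q d) + 1)], against the choice of [N]. So
   [G(0) = +-1], [Phi] is integral, and its reversal is a monic integral polynomial
   vanishing at [alpha]. *)

Set Implicit Arguments.
Unset Strict Implicit.
Unset Printing Implicit Defensive.
Import GRing.Theory Num.Theory.
Local Open Scope ring_scope.

Section PowerSums.
Variables (R : comNzRingType) (I : Type) (r : seq I) (x : I -> R).

Definition recip_prod_poly : {poly R} := \prod_(i <- r) (1 - (x i)%:P * 'X).

Definition power_sum_poly (N : nat) : {poly R} :=
  \sum_(1 <= k < N.+1) (\sum_(i <- r) x i ^+ k)%:P * 'X^k.

Lemma coef_power_sum_poly N k : (power_sum_poly N)`_k =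
  if (1 <= k <= N)%N then \sum_(i <- r) x i ^+ k else 0.
Proof.
rewrite coef_sum; under eq_bigr => j _ do rewrite coefCM coefXn.
case: ifP => kN; last first.
  rewrite big1_seq // => j /andP[_]; rewrite mem_index_iota ltnS => jN.
  by case: eqP => [ejk|]; [move: kN; rewrite ejk jN | rewrite mulr0].
rewrite (bigD1_seq k) ?mem_index_iota ?iota_uniq //= eqxx mulr1 big1_seq ?addr0 //.
by move=> j /andP[jk _]; rewrite eq_sym (negbTE jk) mulr0.
Qed.

Lemma recip_prod_poly_coef0 : recip_prod_poly`_0 = 1.
Proof.
rewrite -horner_coef0 horner_prod big1 // => i _.
by rewrite hornerD hornerN hornerM hornerX hornerC hornerC mulr0 subr0.
Qed.

Lemma size_recip_prod_poly : (size recip_prod_poly <= (size r).+1)%N.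
Proof.
rewrite /recip_prod_poly; elim: r => [|i s IHs]; first by rewrite big_nil size_poly1.
rewrite big_cons (leq_trans (size_polyMleq _ _)) // -subn1 leq_subLR.
have s1 : (size (1 - (x i)%:P * 'X)%R <= 2)%N.
  rewrite (leq_trans (size_polyD _ _)) // geq_max size_poly1 size_polyN.
  by rewrite (leq_trans (size_polyMleq _ _)) // size_polyX size_polyC; case: (_ != 0).
exact: leq_add s1 IHs.
Qed.

Lemma geometric_sum_polyM (a : R) N :
  (\sum_(1 <= k < N.+1) (a ^+ k)%:P * 'X^k) * (1 - a%:P * 'X)
    = a%:P * 'X - (a ^+ N.+1)%:P * 'X^(N.+1).
Proof.
elim: N => [|N IHN]; first by rewrite big_geq // mul0r expr1 expr1; ring.
by rewrite big_nat_recr //= mulrDl IHN !exprS polyCM; ring.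
Qed.

(* Newton's identities: the logarithmic derivative of [recip_prod_poly] is minus the
   generating series of the power sums. *)
Lemma power_sum_poly_newton N : exists Q,
  power_sum_poly N * recip_prod_poly + 'X * recip_prod_poly^`() = 'X^(N.+1) * Q.
Proof.
rewrite /power_sum_poly /recip_prod_poly; elim: r => [|i s [Q IHs]].
  exists 0; rewrite big_nil derivC mulr0 addr0 mulr0.
  by rewrite big1 ?mul0r // => k _; rewrite big_nil mul0r.
rewrite big_cons; set P := \prod_(j <- s) _ in IHs *.
set S := \sum_(1 <= k < N.+1) (\sum_(j <- s) x j ^+ k)%:P * 'X^k in IHs *.
set Si := \sum_(1 <= k < N.+1) (x i ^+ k)%:P * 'X^k.
have -> : \sum_(1 <= k < N.+1) (\sum_(j <- i :: s) x j ^+ k)%:P * 'X^k = Si + S.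
  by rewrite -big_split /=; apply: eq_bigr => k _; rewrite big_cons polyCD mulrDl.
exists ((1 - (x i)%:P * 'X) * Q - (x i ^+ N.+1)%:P * P).
rewrite !derivE; transitivity (Si * (1 - (x i)%:P * 'X) * P - (x i)%:P * 'X * P
  + (1 - (x i)%:P * 'X) * (S * P + 'X * P^`())); first ring.
by rewrite geometric_sum_polyM IHs; ring.
Qed.

End PowerSums.

Lemma recip_prod_poly_root (F : fieldType) (I : eqType) (r : seq I) (x : I -> F) i :
  i \in r -> x i != 0 -> (recip_prod_poly r x).[(x i)^-1] = 0.
Proof.
move=> ri xi0; rewrite horner_prod (big_rem i) //=.
by rewrite hornerD hornerN hornerM hornerX !hornerC mulfV // subrr mul0r.
Qed.

Lemma coprimep_Xn_decomp (F : fieldType) (m : nat) (u : {poly F}) a :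
  coprimep 'X^m u ->
  exists x y : {poly F}, (size x <= m)%N /\ a = x * u + 'X^m * y.
Proof.
move=> /Bezout_eq1_coprimepP [[r s] /= ers].
exists ((a * s) %% 'X^m), ((a * s) %/ 'X^m * u + a * r); split.
  by have := ltn_modp (a * s) 'X^m; rewrite size_polyXn monic_neq0 ?monicXn.
have -> : (a * s) %% 'X^m = a * s - (a * s) %/ 'X^m * 'X^m.
  by rewrite {2}(divp_eq (a * s) 'X^m) addrAC subrr add0r.
by rewrite -[a in LHS]mulr1 -ers; ring.
Qed.

Section ReductionModPrime.
Variable p : nat.
Hypothesis p_pr : prime p.

Local Notation pZ := ((p%:Z)%:P : {poly int}).
Local Notation red := (map_poly (intr : int -> 'F_p)).

Lemma Fp_intr_eq0 (z : int) : ((z%:~R : 'F_p) == 0) = (p %| z)%Z.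
Proof.
rewrite [z in LHS]intEsign rmorphM rmorphXn /= rmorphN1 mulf_eq0 expf_eq0.
rewrite oppr_eq0 oner_eq0 andbF /= -[_%:~R]/(`|z|%:R : 'F_p).
by rewrite -(inj_eq val_inj) /= val_Fp_nat.
Qed.

Lemma pint_neq0 : p%:Z != 0.
Proof. by rewrite eqz_nat -lt0n prime_gt0. Qed.

Lemma pZ_neq0 : pZ != 0.
Proof. by rewrite polyC_eq0 pint_neq0. Qed.

Lemma red_pZ : red pZ = 0.
Proof. by rewrite map_polyC /= -[_%:~R]/(p%:R : 'F_p) pchar_Fp_0. Qed.

Lemma red_eq0_pZ (Q : {poly int}) : red Q = 0 -> exists Q', Q = pZ * Q'.
Proof.
move=> redQ; exists (\poly_(i < size Q) (Q`_i %/ p)%Z); apply/polyP => i.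
rewrite coefCM coef_poly; case: ltnP => ltiQ; last by rewrite mulr0 nth_default.
have /eqP : (red Q)`_i = 0 by rewrite redQ coef0.
by rewrite coef_map Fp_intr_eq0 mulrC => pQi; rewrite divzK.
Qed.

Lemma red_lift (b : {poly 'F_p}) : exists Q, red Q = b /\ (size Q <= size b)%N.
Proof.
exists (\poly_(i < size b) (val b`_i)%:Z); split; last exact: size_poly.
apply/polyP => i; rewrite coef_map coef_poly /=; case: ltnP => ltib.
  exact: natr_Zp.
by rewrite nth_default.
Qed.

Lemma coprimep_Xn_red (m : nat) (U : {poly int}) : ~~ (p %| U`_0)%Z ->
  coprimep 'X^m (red U).
Proof.
move=> U0; rewrite coprimep_sym; apply: coprimep_expr.
by rewrite -['X]subr0 -polyC0 coprimep_XsubC /root horner_coef0 coef_map Fp_intr_eq0.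
Qed.

(* Hensel lifting of the factorisation [G = X^m (G div X^m)] mod [p]. *)
Lemma distinguished_factorization (m : nat) (G : {poly int}) :
  (forall i, (i < m)%N -> (p %| G`_i)%Z) -> ~~ (p %| G`_m)%Z ->
  forall n, exists V U A : {poly int}, [/\ (size V <= m)%N, ~~ (p %| U`_0)%Z &
     G = ('X^m + pZ * V) * U + pZ ^+ n.+1 * A].
Proof.
move=> Glow Gm; elim=> [|n [V [U [A [sV U0 eG]]]]].
  have /red_eq0_pZ [A eA] : red (take_poly m G) = 0.
    apply/polyP => i; rewrite coef_map coef_take_poly coef0.
    by case: ltnP => // ltim; apply/eqP; rewrite Fp_intr_eq0 Glow.
  exists 0, (drop_poly m G), A; split; rewrite ?size_poly0 ?coef_drop_poly //.
  by rewrite -{1}(poly_take_drop m G) eA; ring.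
have [x [y [sx ex]]] := coprimep_Xn_decomp (red A) (coprimep_Xn_red m U0).
have [[X [rX sX]] [Y [rY _]]] := (red_lift x, red_lift y).
have /red_eq0_pZ [A' eA'] : red (A - X * U - 'X^m * Y) = 0.
  by rewrite !rmorphB !rmorphM /= map_polyXn rX rY ex; ring.
exists (V + pZ ^+ n * X), (U + pZ ^+ n.+1 * Y), (A' - V * Y - pZ ^+ n * X * Y); split.
- rewrite (leq_trans (size_polyD _ _)) // geq_max sV -polyC_exp size_Cmul.
    exact: leq_trans sX sx.
  by rewrite expf_neq0 // -lt0n prime_gt0.
- by rewrite -polyC_exp coefD coefCM rpredDr // dvdz_mulr // dvdz_exp.
- rewrite eG (_ : A = pZ * A' + X * U + 'X^m * Y); last by rewrite -eA'; ring.
  by rewrite !exprS; ring.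
Qed.

Section DistinguishedPolynomial.
Variables (m : nat) (V U : {poly int}).
Hypothesis pU0 : ~~ (p %| U`_0)%Z.
Local Notation W := ('X^m + pZ * V).

(* Mod p the relation reads [z X^m = u E + X^K c] with [u(0) != 0]: hence [X^m] divides
   [E], which has size at most [m + 1], and evaluating at 0 kills the quotient. *)
Lemma distinguished_step n K (z E A C : {poly int}) :
  (m < K)%N -> (size E <= m.+1)%N -> z`_0 = 0 ->
  z * W - U * E = pZ ^+ n.+1 * A + 'X^K * C ->
  exists E' z', E = pZ * E' /\ z = pZ * z' + 'X^(K - m) * C.
Proof.
move=> ltmK sE z0; rewrite exprS -mulrA => /(congr1 red).
rewrite !(rmorphB, rmorphD, rmorphM) /= !map_polyXn red_pZ !mul0r addr0 add0r.
set w := red z; set u := red U; set e := red E; set c := red C => rel.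
have XK : 'X^K = 'X^m * 'X^(K - m) :> {poly 'F_p} by rewrite -exprD subnKC // ltnW.
have : ('X^m %| u * e).
  apply/dvdpP; exists (w - 'X^(K - m) * c).
  have -> : u * e = w * 'X^m - 'X^K * c by rewrite -rel; ring.
  by rewrite XK; ring.
rewrite Gauss_dvdpr ?coprimep_Xn_red // => /dvdpP [Q eQ].
have /size1_polyC eQc : (size Q <= 1)%N.
  have [-> | Q0] := eqVneq Q 0; first by rewrite size_poly0.
  have : (size e <= m.+1)%N by rewrite (leq_trans (size_poly _ _)).
  by rewrite eQ size_mulXn // -[m.+1]addn1 leq_add2l.
have ewc : w - 'X^(K - m) * c = Q`_0 *: u.
  apply: (@mulfI _ 'X^m); first by rewrite monic_neq0 ?monicXn.
  by rewrite mulrBr mulrA -XK -rel eQ {1}eQc -mul_polyC; ring.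
have Q00 : Q`_0 = 0.
  move/(congr1 (horner^~ 0)): ewc; rewrite hornerZ hornerD hornerN hornerM hornerXn.
  rewrite !horner_coef0 !coef_map z0 expr0n subn_eq0 leqNgt ltmK /= mul0r subr0.
  move/esym/eqP; rewrite mulf_eq0 Fp_intr_eq0 (negbTE pU0) orbF => /eqP //.
have [E' eE] : exists E', E = pZ * E' by apply: red_eq0_pZ; rewrite -/e eQ eQc Q00 mul0r.
have [z' ez] : exists z', z - 'X^(K - m) * C = pZ * z'.
  by apply: red_eq0_pZ; rewrite rmorphB rmorphM /= map_polyXn ewc Q00 scale0r.
by exists E', z'; split; rewrite // -ez addrNK.
Qed.

Lemma distinguished_coef_dvd n K (z E A C : {poly int}) :
  (m * n.+1 < K)%N -> (size E <= m.+1)%N -> z`_0 = 0 ->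
  z * W - U * E = pZ ^+ n.+1 * A + 'X^K * C -> (p%:Z ^+ n.+1 %| E`_m)%Z.
Proof.
elim: n K z E A C => [|n IHn] K z E A C ltK sE z0 rel.
  rewrite muln1 in ltK; have [E' [z' [-> _]]] := distinguished_step ltK sE z0 rel.
  by rewrite coefCM dvdz_mulr.
have ltmK : (m < K)%N by apply: leq_ltn_trans ltK; rewrite leq_pmulr.
have [E' [z' [eE ez]]] := distinguished_step ltmK sE z0 rel.
have rel' : z' * W - U * E' = pZ ^+ n.+1 * A + 'X^(K - m) * (- (C * V)).
  apply: (mulfI pZ_neq0); transitivity (z * W - U * E - 'X^(K - m) * C * W).
    by rewrite ez eE; ring.
  by rewrite rel -{1}(subnKC (ltnW ltmK)) exprD !exprS; ring.
have z'0 : z'`_0 = 0.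
  move/(congr1 (fun Q : {poly int} => Q`_0)): ez.
  rewrite z0 coefD coefCM coefXnM subn_gt0 ltmK addr0 => /esym/eqP.
  by rewrite mulf_eq0 (negbTE pint_neq0) => /eqP.
have sE' : (size E' <= m.+1)%N by rewrite eE size_Cmul ?polyC_eq0 ?pint_neq0 in sE.
have ltK' : (m * n.+1 < K - m)%N by rewrite ltn_subRL addnC -mulnSr.
by rewrite eE coefCM exprS dvdz_mul2l ?pint_neq0 // (IHn _ _ _ _ _ ltK' sE' z'0 rel').
Qed.

End DistinguishedPolynomial.

(* Factor [G = W U] mod [p^(v+1)] with [W] distinguished of degree [m]; the Newton
   relation for [G] then yields one for [W] whose error term [-M X W'] has coefficient
   [-M m] at [X^m], and [p^(v+1)] cannot divide it. *)
Lemma newton_index_bound (G Y : {poly int}) (M m N : nat) : (0 < M)%N -> (0 < m)%N ->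
  (forall i, (i < m)%N -> (p %| G`_i)%Z) -> ~~ (p %| G`_m)%Z -> Y`_0 = 0 ->
  (exists C, Y * G + (M%:Z)%:P * ('X * G^`()) = 'X^(N.+1) * C) ->
  (N < m * (logn p (M * m)).+1)%N.
Proof.
move=> M0 m0 Glow Gm Y0 [C eC]; rewrite ltnNge; apply/negP => leN.
set v := logn p (M * m).
have [V [U [A [sV U0 eG]]]] := distinguished_factorization Glow Gm v.
set W := 'X^m + pZ * V in eG.
set E := - ((M%:Z)%:P * ('X * W^`())).
have cE j : (0 < j)%N -> E`_j = - (M%:Z * ((j == m)%:R + p%:Z * V`_j) *+ j).
  by case: j => // j _; rewrite coefN coefCM coefXM coef_deriv coefD coefXn coefCM mulrnAr.
have sE : (size E <= m.+1)%N.
  apply/leq_sizeP => j ltmj; rewrite cE ?(leq_trans _ ltmj) // gtn_eqF //.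
  by rewrite nth_default ?(leq_trans sV) 1?ltnW // mulr0 addr0 mulr0 mul0rn oppr0.
have Em : E`_m = - (M * m)%N%:Z.
  by rewrite cE // eqxx nth_default // mulr0 addr0 mulr1 -mulr_natr natz PoszM.
have rel : (Y * U + (M%:Z)%:P * ('X * U^`())) * W - U * E
    = pZ ^+ v.+1 * (- (Y * A + (M%:Z)%:P * ('X * A^`()))) + 'X^(N.+1) * C.
  rewrite -eC eG derivD !derivM -polyC_exp derivC mul0r add0r /E; ring.
have z0 : (Y * U + (M%:Z)%:P * ('X * U^`()))`_0 = 0.
  by rewrite coefD coef0M Y0 mul0r add0r coefCM coefXM mulr0.
have /(distinguished_coef_dvd U0) := rel.
rewrite Em dvdzE abszN abszX absz_nat pfactor_dvdn ?muln_gt0 ?M0 ?ltnn //.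
by move/(_ leN sE z0).
Qed.

End ReductionModPrime.

Lemma logn_le_trunc_log2 p n : prime p -> (0 < n)%N -> (logn p n <= trunc_log 2 n)%N.
Proof.
move=> p_pr n0; apply: trunc_log_max => //.
apply: leq_trans (dvdn_leq n0 (pfactor_dvdnn p n)).
by case: logn => // e; rewrite leq_exp2r // prime_gt1.
Qed.

Lemma primitive_newton_coef0_unit (G Y : {poly int}) (M d N : nat) :
  (0 < M)%N -> zcontents G = 1 -> G`_0 != 0 -> (size G <= d.+1)%N -> Y`_0 = 0 ->
  (exists C, Y * G + (M%:Z)%:P * ('X * G^`()) = 'X^(N.+1) * C) ->
  (d * (trunc_log 2 (M * d)).+1 <= N)%N -> G`_0 \is a GRing.unit.
Proof.
move=> M0 G1 G0 sG Y0 eqN leN.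
suff : ~~ (1 < `|(G`_0)%R|)%N by move: G0; case: (G`_0) => [[|[|n]]|[|n]].
apply/negP => /pdiv_prime p_pr.
set p := pdiv _ in p_pr; set m := find (predC (dvdz p)) G.
have hasG : has (predC (dvdz p)) G.
  rewrite has_predC -[all _ _]/(G \is a polyOver _) -dvdz_contents G1 dvdz1.
  by rewrite gtn_eqF ?prime_gt1.
have Gm : ~~ (p %| G`_m)%Z := nth_find 0 hasG.
have Glow i : (i < m)%N -> (p %| G`_i)%Z by move/(before_find 0)/negbFE.
have m0 : (0 < m)%N by rewrite lt0n; apply: contraNneq Gm => ->; apply: pdiv_dvd.
have ledm : (m <= d)%N by rewrite -ltnS (leq_trans _ sG) // -has_find.
have := newton_index_bound p_pr M0 m0 Glow Gm Y0 eqN.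
rewrite ltnNge (leq_trans _ leN) // leq_mul // ltnS.
apply: leq_trans (logn_le_trunc_log2 _ _) (leq_trunc_log _ _); rewrite ?muln_gt0 ?M0 //.
by rewrite leq_mul2l ledm orbT.
Qed.

Lemma poly_coef_eq0_mulXn (R : nzRingType) (Z : {poly R}) n :
  (forall j, (j < n)%N -> Z`_j = 0) -> exists C, Z = 'X^n * C.
Proof.
move=> Z0; exists (drop_poly n Z); rewrite -{1}(poly_take_drop n Z) commr_polyXn.
suff -> : take_poly n Z = 0 by rewrite add0r.
by apply/polyP => j; rewrite coef_take_poly coef0; case: ltnP => // /Z0.
Qed.

Local Notation pZtoQ := (map_poly (intr : int -> rat)).

Lemma rat_poly_primitive (P : {poly rat}) : P`_0 = 1 ->
  exists G : {poly int}, zcontents G = 1 /\ pZtoQ G = (G`_0)%:~R *: P.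
Proof.
move=> P0; have [Q [a a0 eQ]] := rat_poly_scale P.
have Q0 : Q != 0.
  apply/eqP => Q0; move: P0; rewrite eQ Q0 rmorph0 scaler0 coef0 => /eqP.
  by rewrite eq_sym oner_eq0.
set c : rat := a%:~R^-1 * (zcontents Q)%:~R.
have eP : P = c *: pZtoQ (zprimitive Q) by rewrite eQ {1}(zpolyEprim Q) map_polyZ /= scalerA.
have c0 : c != 0 by rewrite mulf_neq0 ?invr_eq0 ?intr_eq0 ?zcontents_eq0.
have eG : pZtoQ (zprimitive Q) = c^-1 *: P by rewrite eP scalerA mulVf ?scale1r.
exists (zprimitive Q); rewrite zcontents_primitive Q0 eG; split => //.
by rewrite -coef_map eG coefZ P0 mulr1.
Qed.

Lemma rat_newton_int (G : {poly int}) (P T : {poly rat}) (c : rat) (q N : nat) :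
  pZtoQ G = c *: P -> T`_0 = 0 -> (forall k, exists z : int, q%:R * T`_k = z%:~R) ->
  (forall j, (j <= N)%N -> (T * P + 'X * P^`())`_j = 0) ->
  exists2 Y : {poly int}, Y`_0 = 0 &
    exists C, Y * G + (q%:Z)%:P * ('X * G^`()) = 'X^(N.+1) * C.
Proof.
move=> eG T0 qT newtonPT; pose Y := map_poly numq (q%:R *: T).
have eY : pZtoQ Y = q%:R *: T.
  apply/polyP => k; rewrite coef_map coef_map_id0 // coefZ /=.
  by have [z ->] := qT k; rewrite numq_int.
exists Y; first by rewrite coef_map_id0 // coefZ T0 mulr0.
apply: poly_coef_eq0_mulXn => j ltjN; apply/eqP; rewrite -(@intr_eq0 rat) -coef_map.
rewrite rmorphD !rmorphM /= map_polyC map_polyX -deriv_map eY eG derivZ /=.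
rewrite -[(q%:Z)%:~R]/(q%:R : rat) -scalerAl -!scalerAr mul_polyC !scalerA [c * _]mulrC.
by rewrite -scalerDr coefZ newtonPT ?mulr0.
Qed.

Lemma newton_rat_poly_int (P T : {poly rat}) (q d N : nat) : (0 < q)%N ->
  P`_0 = 1 -> (size P <= d.+1)%N -> T`_0 = 0 ->
  (forall k, exists z : int, q%:R * T`_k = z%:~R) ->
  (forall j, (j <= N)%N -> (T * P + 'X * P^`())`_j = 0) ->
  (d * (trunc_log 2 (q * d)).+1 <= N)%N ->
  exists G : {poly int}, P = pZtoQ G.
Proof.
move=> q0 P0 sP T0 qT newtonPT leN.
have [G [G1 eG]] := rat_poly_primitive P0.
have [Y Y0 newtonGY] := rat_newton_int eG T0 qT newtonPT.
have G0 : G`_0 != 0.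
  apply/eqP => G0; move: G1; suff -> : G = 0 by rewrite zcontents0.
  by apply/eqP; rewrite -size_poly_eq0 -size_rat_int_poly eG G0 scale0r size_poly0.
have sG : (size G <= d.+1)%N.
  by rewrite -(size_rat_int_poly G) eG size_scale ?intr_eq0.
have uG0 := primitive_newton_coef0_unit q0 G1 G0 sG Y0 newtonGY leN.
exists (G`_0 *: G); rewrite map_polyZ /= eG scalerA -intrM.
by rewrite (mulVr uG0 : G`_0 * G`_0 = 1) scale1r.
Qed.

Lemma reciprocal_alg_int (F : fieldType) (x : F) (G : {poly int}) (n : nat) :
  x != 0 -> G`_0 = 1 -> (size G <= n.+1)%N -> root (map_poly intr G) x^-1 -> is_alg_int x.
Proof.
move=> x0 G0 sG rootG; exists (\poly_(i < n.+1) G`_(n - i)); split.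
  rewrite monicE lead_coefE size_poly_eq; last by rewrite subnn G0 oner_eq0.
  by rewrite coef_poly /= ltnSn subnn G0.
have sGF : (size (map_poly (intr : int -> F) G) <= n.+1)%N.
  by rewrite (leq_trans (size_poly _ _)).
apply/eqP; transitivity (x ^+ n * (map_poly intr G).[x^-1]); last by rewrite (eqP rootG) mulr0.
rewrite (horner_coef_wide _ sGF) (@horner_coef_wide _ n.+1) ?(leq_trans (size_poly _ _)) //.
rewrite big_distrr (reindex_inj rev_ord_inj) /=; apply: eq_bigr => i _.
have lein : (i <= n)%N by rewrite -ltnS.
rewrite !coef_map /= coef_poly subSS ltnS leq_subr subKn // exprVn.
by rewrite mulrCA -[n in x ^+ n](subnK lein) exprD mulfK ?expf_neq0.
Qed.

Section GaloisPowerSums.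
Variable L : splittingFieldType rat.
Local Notation Gal := 'Gal({:L} / 1)%g.

Lemma galois1_fullv : galois 1 {:L}.
Proof.
apply/and3P; split; [exact: sub1v | | exact: normalFieldf].
by apply/separableP => y _; apply: pcharf0_separable => n; rewrite pchar_lalg pchar_num.
Qed.

Lemma card_gal1_fullv : #|Gal| = \dim {:L}.
Proof. by rewrite -galois_dim ?galois1_fullv // dimv1 divn1. Qed.

Lemma gal_fixed_rat (c : L) : (forall s, s \in Gal -> s c = c) -> c \in 1%VS.
Proof.
move=> fixc; rewrite -(galois_fixedField galois1_fullv).
by apply/fixedFieldP; [exact: memvf | exact: fixc].
Qed.

Lemma power_sum_gal (a : L) k :
  \sum_(s <- enum Gal) s a ^+ k = galTrace 1 {:L} (a ^+ k).
Proof. by rewrite big_enum; apply: eq_bigr => s _; rewrite rmorphXn. Qed.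

Variable alpha : L.
Local Notation Phi := (recip_prod_poly (enum Gal) (fun s => s alpha)).
Local Notation Spow := (power_sum_poly (enum Gal) (fun s => s alpha)).

Lemma recip_prod_gal_fixed t : t \in Gal -> map_poly t Phi = Phi.
Proof.
move=> tG; rewrite /recip_prod_poly !big_enum rmorph_prod /=.
rewrite [RHS](reindex_inj (mulIg t)) /=; apply: eq_big => [s|s _].
  by rewrite groupMr.
by rewrite rmorphB rmorph1 rmorphM /= map_polyC map_polyX /= galM ?memvf.
Qed.

Lemma recip_prod_gal_rat : exists P : {poly rat}, Phi = map_poly (in_alg L) P.
Proof.
apply/polyOver1P/polyOverP => i; apply: gal_fixed_rat => t tG.
by rewrite -{2}(recip_prod_gal_fixed tG) coef_map.
Qed.

Lemma power_sum_gal_rat N : exists T : {poly rat}, Spow N = map_poly (in_alg L) T.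
Proof.
apply/polyOver1P/polyOverP => i; rewrite coef_power_sum_poly power_sum_gal.
by case: ifP => _; [exact: (mem_galTrace galois1_fullv (memvf _)) | exact: rpred0].
Qed.

Lemma gal_newton_rat N : alpha != 0 -> exists P T : {poly rat}, [/\
  P`_0 = 1, (size P <= (\dim {:L}).+1)%N, root (map_poly (in_alg L) P) alpha^-1,
  forall k, in_alg L T`_k = (if (1 <= k <= N)%N then galTrace 1 {:L} (alpha ^+ k) else 0) &
  forall j, (j <= N)%N -> (T * P + 'X * P^`())`_j = 0].
Proof.
move=> alpha0; have [[P eP] [T eT]] := (recip_prod_gal_rat, power_sum_gal_rat N).
exists P, T; split.
- by apply: (fmorph_inj (in_alg L)); rewrite -coef_map -eP recip_prod_poly_coef0 rmorph1.
- by rewrite -(size_map_poly (in_alg L)) -eP -card_gal1_fullv cardE size_recip_prod_poly.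
- have := @recip_prod_poly_root _ _ (enum Gal) (fun s => s alpha) 1%g.
  by rewrite /root -eP mem_enum group1 gal_id => ->.
- by move=> k; rewrite -coef_map -eT coef_power_sum_poly power_sum_gal.
move=> j leNj; apply: (fmorph_inj (in_alg L)); rewrite rmorph0 -coef_map.
have [Q newton] := power_sum_poly_newton (enum Gal) (fun s => s alpha) N.
rewrite rmorphD !rmorphM /= map_polyX -deriv_map -eP -eT newton coefXnM ltnS leNj //.
Qed.

End GaloisPowerSums.

Theorem corollary2p11 (L : splittingFieldType rat) (alpha : L) (q : nat) :
  alpha != 0 ->
  (2 <= adjoin_degree 1%VS alpha)%N ->
  splittingFieldFor 1%VS (minPoly 1%VS alpha) fullv ->
  (0 < q)%N ->
  (forall j : nat, (1 <= j <= \dim {:L} + \dim {:L} * trunc_log 2 (q * \dim {:L}) + 1)%N ->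
     in_invq_Z q (galTrace 1%VS fullv (alpha ^+ j))) ->
  is_alg_int alpha.
Proof.
move=> alpha0 _ _ q0 trace_q; set d := \dim {:L}.
set N := (d + d * trunc_log 2 (q * d) + 1)%N in trace_q.
have [P [T [P0 sP rootP eT newtonPT]]] := gal_newton_rat N alpha0.
have T0 : T`_0 = 0 by move: (eT 0); rewrite -(rmorph0 (in_alg L)) => /fmorph_inj.
have qT k : exists z : int, q%:R * T`_k = z%:~R.
  move: (eT k); case: ifP => [/trace_q [z ->] /fmorph_inj -> | _].
    by exists z; rewrite mulrC divfK // pnatr_eq0 -lt0n.
  by rewrite -(rmorph0 (in_alg L)) => /fmorph_inj ->; exists 0; rewrite mulr0.
have leN : (d * (trunc_log 2 (q * d)).+1 <= N)%N by rewrite /N mulnS addn1 leqW.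
have [G eG] := newton_rat_poly_int q0 P0 sP T0 qT newtonPT leN.
apply: (@reciprocal_alg_int _ _ G d alpha0).
- by apply: (@intr_inj rat); rewrite -coef_map -eG P0.
- by rewrite -(size_rat_int_poly G) -eG.
by rewrite eG -map_poly_comp (eq_map_poly (rmorph_int (in_alg L))) in rootP.
Qed.
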